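(* Let $k=0$ and let $a$ be a regular scale factor which is an even function on $\mathbb R$, such that either $\infty>\dot a(0^+)>0$, or $\dot a(0)=0$ but $a^{(n)}(0)\ne0$ for some $n$. Then for every $\tau>0$ and every $(x,y,z)$ with $\sqrt{x^2+y^2+z^2}=\rho_{\mathcal M_\tau}$, the $4\times4$ matrix \[ \begin{pmatrix} g_{\tau\tau} & 0 & 0 & 0\\ 0 & 1+\lambda_0(y^2+z^2) & -\lambda_0xy & -\lambda_0xz\\ 0 & -\lambda_0xy & 1+\lambda_0(x^2+z^2) & -\lambda_0yz\\ 0 & -\lambda_0xz & -\lambda_0yz & 1+\lambda_0(x^2+y^2)\end{pmatrix}, \] with $g_{\tau\tau}=g_{\tau\tau}(\tau,\rho_{\mathcal M_\tau})$ and $\lambda_0=\lambda_0(\tau,\rho_{\mathcal M_\tau})$, has rank $2$. Thus the cotangent space at each point of the cosmological-time-zero set is two dimensional.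
   Context: A function $a:[0,\infty)\to[0,\infty)$ is a regular scale factor if: (a) $a(0)=0$; (b) $a$ is increasing and continuous on $[0,\infty)$, twice continuously differentiable on $(0,\infty)$, with an inverse function on $[0,\infty)$; (c) $\frac{a(t)\ddot a(t)}{\dot a(t)^2}\le1$ for all $t>0$ (presupposing $\dot a(t)\ne0$). Here $a$ is regarded on $\mathbb R$ via $a(-t)=a(t)$; $\dot a(0^+)=\lim_{t\to0^+}\dot a(t)$. For $0<s<\tau$, $\chi_s(\tau)=\int_s^\tau\frac{1}{a(t)}\frac{a(\tau)}{\sqrt{a^2(\tau)-a^2(t)}}dt$. For $\tau>0$, $\rho_{\mathcal M_\tau}=\int_0^\tau\frac{a(t)}{\sqrt{a^2(\tau)-a^2(t)}}dt$; for $0<\rho<2\rho_{\mathcal M_\tau}$, $t_0(\tau,\rho)$ is the unique $t_0\in(-\tau,\tau)$ with $\rho=\int_{t_0}^\tau\frac{a(t)}{\sqrt{a^2(\tau)-a^2(t)}}dt$ ($t_0=0$ iff $\rho=\rho_{\mathcal M_\tau}$). Define $f(\tau,t_0)=\int_{t_0}^{\tau}\frac{\ddot a(t)}{\dot a(t)^2}\left(\frac{\sqrt{a^2(\tau)-a^2(t_0)}}{\sqrt{a^2(\tau)-a^2(t)}}-1\right)dt$ for $0\le t_0<\tau$ and $g_{\tau\tau}(\tau,\rho)=-[1-\dot a(\tau)f(\tau,t_0(\tau,\rho))]^2$, so $g_{\tau\tau}(\tau,\rho_{\mathcal M_\tau})=-[1-\dot a(\tau)f(\tau,0)]^2$. For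 $t_0=t_0(\tau,\rho)\ne0$, $g_{\theta\theta}(\tau,\rho)=a^2(t_0)\chi_{|t_0|}(\tau)^2$, and $g_{\theta\theta}(\tau,\rho_{\mathcal M_\tau})$ is the limit as $t_0\to0$. $\lambda_0(\tau,\rho)=\frac{g_{\theta\theta}(\tau,\rho)-\rho^2}{\rho^4}$. The displayed matrix is the extended spatially flat Robertson–Walker metric in Fermi coordinates $(\tau,x,y,z)$ of a comoving observer, with $\rho=\sqrt{x^2+y^2+z^2}$. *)

From Stdlib Require Import Reals.
From Coquelicot Require Import Coquelicot.
From mathcomp Require Import all_boot all_algebra.
From mathcomp Require Import Rstruct.

Open Scope R_scope.

Definition iint (f : R -> R) (lo hi : R) : R :=
  RInt_gen f (at_right lo) (at_left hi).

Definition ad (a : R -> R) : R -> R := Derive a.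
Definition add (a : R -> R) : R -> R := Derive (Derive a).

(* regular scale factor (a regarded on R, conditions on [0,oo)) *)
Definition regular_scale_factor (a : R -> R) : Prop :=
  a 0 = 0 /\
  (forall t, 0 <= t -> 0 <= a t) /\
  (forall s t, 0 <= s -> s < t -> a s < a t) /\
  (forall t, 0 <= t -> continuous a t) /\
  (forall t, 0 < t -> ex_derive a t /\ ex_derive (Derive a) t /\
                      continuous (Derive (Derive a)) t) /\
  (forall y, 0 <= y -> exists t, 0 <= t /\ a t = y) /\
  (forall t, 0 < t -> ad a t <> 0 /\ a t * add a t / (ad a t) ^ 2 <= 1).

Definition chi (a : R -> R) (s tau : R) : R :=
  iint (fun t => / a t * (a tau / sqrt (a tau ^ 2 - a t ^ 2))) s tau.

Definition rhoM (a : R -> R) (tau : R) : R :=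
  iint (fun t => a t / sqrt (a tau ^ 2 - a t ^ 2)) 0 tau.

Definition ff (a : R -> R) (tau t0 : R) : R :=
  iint (fun t => add a t / (ad a t) ^ 2 *
          (sqrt (a tau ^ 2 - a t0 ^ 2) / sqrt (a tau ^ 2 - a t ^ 2) - 1)) t0 tau.

Definition gtt_M (a : R -> R) (tau : R) : R :=
  - (1 - ad a tau * ff a tau 0) ^ 2.

Definition gthth_M (a : R -> R) (tau : R) : R :=
  real (Lim (fun t0 => a t0 ^ 2 * chi a (Rabs t0) tau ^ 2) 0).

Definition lambda0_M (a : R -> R) (tau : R) : R :=
  (gthth_M a tau - rhoM a tau ^ 2) / rhoM a tau ^ 4.

Definition mx_of_rows (rows : seq (seq R)) : 'M[R]_4 :=
  \matrix_(i < 4, j < 4) nth 0 (nth [::] rows i) j.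

Definition metric_M (a : R -> R) (tau x y z : R) : 'M[R]_4 :=
  let g := gtt_M a tau in
  let l := lambda0_M a tau in
  mx_of_rows
    [:: [:: g; 0; 0; 0];
        [:: 0; 1 + l * (y ^ 2 + z ^ 2); - (l * x * y); - (l * x * z)];
        [:: 0; - (l * x * y); 1 + l * (x ^ 2 + z ^ 2); - (l * y * z)];
        [:: 0; - (l * x * z); - (l * y * z); 1 + l * (x ^ 2 + y ^ 2)]].

(* On the sphere rho = rho_M the spatial block of the metric is
   I + lambda0 (rho^2 I - v v^T).  As s -> 0 the product a(s) chi_s(tau) tends
   to 0, because for t >= s the factor a(s) <= a(t) cancels the singular factor
   1/a(t) of the integrand of chi_s.  Hence g_thth = 0, lambda0 = -1/rho_M^2
   and the spatial block is v v^T / rho_M^2, of rank one.  The rank is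
   therefore 2 as soon as g_tautau <> 0, i.e. a'(tau) f(tau, 0) <> 1.

   Let G(t) = a(t) / (a(tau) + sqrt(a(tau)^2 - a(t)^2)), so G(0) = 0 and
   G(tau) = 1.  The regularity condition a a'' <= a'^2 makes a'/a
   nonincreasing, which gives G' >= a'(tau) times the integrand of f(tau, 0);
   the inequality is strict somewhere, since a'/a constant on (0, tau] would
   make a exponential, contradicting a(0) = 0.  Integrating over (0, tau)
   yields a'(tau) f(tau, 0) < G(tau) - G(0) = 1. *)

From Stdlib Require Import Reals Lra Psatz Classical.
From Coquelicot Require Import Coquelicot.
From mathcomp Require Import all_boot all_algebra.
From mathcomp Require Import Rstruct.

Open Scope R_scope.

(** * Limits and improper integrals on real intervals *)

Lemma continuous_Rplus (f g : R -> R) x :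
  continuous f x -> continuous g x -> continuous (fun t => f t + g t) x.
Proof. exact: continuous_plus. Qed.

Lemma continuous_Rminus (f g : R -> R) x :
  continuous f x -> continuous g x -> continuous (fun t => f t - g t) x.
Proof. exact: continuous_minus. Qed.

Lemma continuous_Rmult (f g : R -> R) x :
  continuous f x -> continuous g x -> continuous (fun t => f t * g t) x.
Proof. exact: continuous_mult. Qed.

Lemma continuous_Rdiv (f g : R -> R) x :
  continuous f x -> continuous g x -> g x <> 0 -> continuous (fun t => f t / g t) x.
Proof.
by move=> cf cg gx0; apply: continuous_Rmult cf (continuous_Rinv_comp _ _ cg gx0).
Qed.

Lemma continuous_pow (f : R -> R) n x :
  continuous f x -> continuous (fun t => f t ^ n) x.
Proof.
move=> cf; elim: n => [|n IH] /=; [exact: continuous_const | exact: continuous_Rmult].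
Qed.

Lemma filterlim_Rplus {T} (F : (T -> Prop) -> Prop) {FF : Filter F} (f g : T -> R) l1 l2 :
  filterlim f F (locally l1) -> filterlim g F (locally l2) ->
  filterlim (fun x => f x + g x) F (locally (l1 + l2)).
Proof.
move=> hf hg; apply: (filterlim_comp_2 _ _ Rplus hf hg).
exact: (@filterlim_plus _ R_NormedModule).
Qed.

Lemma filterlim_Ropp {T} (F : (T -> Prop) -> Prop) {FF : Filter F} (f : T -> R) l :
  filterlim f F (locally l) -> filterlim (fun x => - f x) F (locally (- l)).
Proof. by move=> hf; apply: filterlim_comp hf (filterlim_Rbar_opp l). Qed.

Lemma filterlim_Rmult_l {T} (F : (T -> Prop) -> Prop) {FF : Filter F} (f : T -> R) c l :
  filterlim f F (locally l) -> filterlim (fun x => c * f x) F (locally (c * l)).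
Proof. by move=> hf; apply: filterlim_comp hf (filterlim_Rbar_mult_l c l). Qed.

Lemma continuous_at_right (f : R -> R) x :
  continuous f x -> filterlim f (at_right x) (locally (f x)).
Proof. by move=> cf; apply: filterlim_filter_le_1 cf; apply: filter_le_within. Qed.

Lemma continuous_at_left (f : R -> R) x :
  continuous f x -> filterlim f (at_left x) (locally (f x)).
Proof. by move=> cf; apply: filterlim_filter_le_1 cf; apply: filter_le_within. Qed.

Lemma at_right_between lo m : lo < m -> at_right lo (fun x => lo < x < m).
Proof.
move=> lo_m; exists (mkposreal _ (Rgt_minus _ _ lo_m)) => x /= /Rabs_lt_between' ? ?.
lra.
Qed.

Lemma at_left_between m hi : m < hi -> at_left hi (fun y => m < y < hi).
Proof.
move=> m_hi; exists (mkposreal _ (Rgt_minus _ _ m_hi)) => y /= /Rabs_lt_between' ? ?.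
lra.
Qed.

Lemma MVT_le (f df : R -> R) s t : s <= t ->
  (forall x, s < x < t -> is_derive f x (df x)) ->
  (forall x, s <= x <= t -> continuous f x) ->
  exists c, s <= c <= t /\ f t - f s = df c * (t - s).
Proof.
move=> st df_f cf; have := MVT_gen f s t df; rewrite Rmin_left ?Rmax_right //.
by apply=> // x /cf /continuity_pt_filterlim.
Qed.

Lemma eventually_at_right_lt (f : R -> R) x e :
  continuous f x -> f x < e -> at_right x (fun t => f t < e).
Proof.
move=> cf fx_e; have /filterlim_locally := continuous_at_right f x cf.
move/(_ (mkposreal _ (Rgt_minus _ _ fx_e))).
by apply: filter_imp => t /= /Rabs_lt_between'; lra.
Qed.

Lemma nondecreasing_bounded_at_left (F : R -> R) m hi M : m < hi ->
  (forall x y, m <= x -> x <= y -> y < hi -> F x <= F y) ->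
  (forall x, m <= x < hi -> F x <= M) ->
  exists L, filterlim F (at_left hi) (locally L) /\ forall x, m <= x < hi -> F x <= L.
Proof.
move=> m_hi F_mono F_bnd.
pose E v := exists x, m <= x < hi /\ v = F x.
have [||L [L_ub L_lub]] := completeness E.
- by exists M => _ [x [hx ->]]; exact: F_bnd.
- by exists (F m), m; split => //; lra.
have F_le_L x : m <= x < hi -> F x <= L by move=> hx; apply: L_ub; exists x.
exists L; split => //; apply/filterlim_locally => eps.
have [x0 [hx0 L_F]] : exists x0, m <= x0 < hi /\ L - eps < F x0.
  apply: NNPP => none.
  suff : L <= L - eps by case: eps {none} => e /=; lra.
  apply: L_lub => _ [x [hx ->]]; apply: Rnot_lt_le => lt; apply: none; by exists x.
exists (mkposreal _ (Rgt_minus _ _ (proj2 hx0))) => y /= /Rabs_lt_between' hy y_hi.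
have := F_mono x0 y (proj1 hx0) ltac:(lra) y_hi; have := F_le_L y ltac:(lra).
move=> ? ?; apply/Rabs_lt_between'; lra.
Qed.

Lemma nonincreasing_bounded_at_right (F : R -> R) lo m M : lo < m ->
  (forall x y, lo < x -> x <= y -> y <= m -> F y <= F x) ->
  (forall x, lo < x <= m -> F x <= M) ->
  exists L, filterlim F (at_right lo) (locally L).
Proof.
move=> lo_m F_mono F_bnd.
have [|||L [FL _]] := nondecreasing_bounded_at_left (fun y => F (- y)) (- m) (- lo) M.
- lra.
- move=> x y *; apply: F_mono; lra.
- move=> x *; apply: F_bnd; lra.
exists L; apply: (filterlim_ext (fun x => F (- - x))); first by move=> x; rewrite Ropp_involutive.
exact: filterlim_comp (filterlim_Ropp_right lo) FL.
Qed.

Lemma filterlim_Rbar_loc_seq_at_right (x : R) :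
  filterlim (Rbar_loc_seq x) eventually (at_right x).
Proof.
move=> P [e near].
have : eventually (fun n => let y := Rbar_loc_seq x n in y <> x -> x < y -> P y).
  apply: (filterlim_Rbar_loc_seq x (fun y => y <> x -> x < y -> P y)).
  by exists e => y ball_y _ _; exact: near.
apply: filter_imp => n /= P_n; have := RinvN_pos n => pos.
by apply: P_n; lra.
Qed.

Lemma continuous_gt_half_nbhd (f : R -> R) x lo hi : lo < x < hi ->
  continuous f x -> 0 < f x ->
  exists p q, lo < p < q /\ q < hi /\ forall t, p <= t <= q -> f x / 2 < f t.
Proof.
move=> hx cf fx_gt0.
have [[e e_gt0] near] : locally x (fun t => (lo < t /\ t < hi) /\ f x / 2 < f t).
  apply: filter_and; first by apply: (open_and _ _ (open_gt lo) (open_lt hi)).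
  by apply: cf; apply: open_gt; lra.
have in_ball t : x - e / 2 <= t <= x + e / 2 -> ball x e t.
  by move=> ht; apply/Rabs_lt_between'; rewrite /=; lra.
have [[lo_p _] _] := near _ (in_ball (x - e / 2) ltac:(lra)).
have [[_ q_hi] _] := near _ (in_ball (x + e / 2) ltac:(lra)).
exists (x - e / 2), (x + e / 2); do 2 split => //; try lra.
by move=> t /in_ball /near [].
Qed.

Lemma ex_RInt_continuous_on (f : R -> R) x y : x <= y ->
  (forall t, x <= t <= y -> continuous f t) -> ex_RInt f x y.
Proof.
by move=> xy cf; apply: ex_RInt_continuous => t; rewrite Rmin_left ?Rmax_right //; exact: cf.
Qed.

Lemma filterlim_RInt_at_right (f : R -> R) lo m : lo < m ->
  (forall t, lo <= t <= m -> continuous f t) ->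
  filterlim (fun x => RInt f x m) (at_right lo) (locally (RInt f lo m)).
Proof.
move=> lo_m cf.
have [M f_bnd] := bounded_continuity f lo m cf.
have M_pos : 0 < M by have := f_bnd lo ltac:(lra); have := norm_ge_0 (f lo); lra.
have intf x y : lo <= x -> x <= y -> y <= m -> ex_RInt f x y.
  by move=> *; apply: ex_RInt_continuous_on => // t ht; apply: cf; lra.
apply/filterlim_locally => eps.
have d_pos : 0 < Rmin (m - lo) (eps / M).
  by apply: Rmin_pos; [lra | apply: Rdiv_lt_0_compat; case: eps].
exists (mkposreal _ d_pos) => x /= /Rabs_lt_between' hx lo_x.
have := Rmin_l (m - lo) (eps / M); have := Rmin_r (m - lo) (eps / M) => d_eps d_m.
have chasles := RInt_Chasles f lo x m (intf lo x _ _ _) (intf x m _ _ _).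
have head := abs_RInt_le_const f lo x M ltac:(lra) (intf lo x ltac:(lra) ltac:(lra) ltac:(lra))
  (fun t ht => Rlt_le _ _ (f_bnd t ltac:(lra))).
change (Rabs (RInt f x m - RInt f lo m) < eps).
rewrite -chasles; try lra; rewrite /Hierarchy.plus /=.
have -> : RInt f x m - (RInt f lo x + RInt f x m) = - RInt f lo x by ring.
rewrite Rabs_Ropp; apply: Rle_lt_trans head _.
have : (x - lo) * M < eps / M * M by apply: Rmult_lt_compat_r; lra.
by rewrite /Rdiv Rmult_assoc Rinv_l ?Rmult_1_r; lra.
Qed.

Lemma filterlim_RInt_at_right_at_left (f : R -> R) lo m hi L1 L2 : lo < m < hi ->
  (forall t, lo < t < hi -> continuous f t) ->
  filterlim (fun x => RInt f x m) (at_right lo) (locally L1) ->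
  filterlim (fun y => RInt f m y) (at_left hi) (locally L2) ->
  filterlim (fun ab => RInt f ab.1 ab.2) (filter_prod (at_right lo) (at_left hi))
    (locally (L1 + L2)).
Proof.
move=> hm cf lim1 lim2.
have intf x y : lo < x -> x <= y -> y < hi -> ex_RInt f x y.
  by move=> *; apply: ex_RInt_continuous_on => // t ht; apply: cf; lra.
apply: (filterlim_ext_loc (fun ab => RInt f ab.1 m + RInt f m ab.2)).
  exists (fun x => lo < x < m) (fun y => m < y < hi);
    [apply: at_right_between; lra | apply: at_left_between; lra |].
  move=> x y hx hy /=.
  by have := RInt_Chasles f x m y (intf x m _ _ _) (intf m y _ _ _); apply; lra.
apply: filterlim_Rplus.
- exact: filterlim_comp filterlim_fst lim1.
- exact: filterlim_comp filterlim_snd lim2.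
Qed.

Lemma is_RInt_gen_at_right_at_left (f : R -> R) lo m hi L1 L2 : lo < m < hi ->
  (forall t, lo < t < hi -> continuous f t) ->
  filterlim (fun x => RInt f x m) (at_right lo) (locally L1) ->
  filterlim (fun y => RInt f m y) (at_left hi) (locally L2) ->
  is_RInt_gen f (at_right lo) (at_left hi) (L1 + L2).
Proof.
move=> hm cf lim1 lim2.
apply: (filterlimi_lim_ext_loc (fun ab => RInt f ab.1 ab.2));
  last exact: filterlim_RInt_at_right_at_left lim1 lim2.
exists (fun x => lo < x < m) (fun y => m < y < hi);
  [apply: at_right_between; lra | apply: at_left_between; lra |].
move=> x y hx hy /=; apply: RInt_correct.
by apply: ex_RInt_continuous_on; [lra | move=> t ht; apply: cf; lra].
Qed.

Lemma nonneg_RInt_at_left (g : R -> R) m hi M : m < hi ->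
  (forall t, m <= t < hi -> continuous g t) ->
  (forall t, m <= t < hi -> 0 <= g t) ->
  (forall y, m <= y < hi -> RInt g m y <= M) ->
  exists L, filterlim (fun y => RInt g m y) (at_left hi) (locally L) /\ 0 <= L.
Proof.
move=> m_hi cg g_ge0 g_bnd.
have intg x y : m <= x -> x <= y -> y < hi -> ex_RInt g x y.
  by move=> *; apply: ex_RInt_continuous_on => // t ht; apply: cg; lra.
have [|L [lim L_ub]] := nondecreasing_bounded_at_left (fun y => RInt g m y) m hi M m_hi _ g_bnd.
  move=> x y mx xy y_hi /=.
  rewrite -(RInt_Chasles g m x y (intg m x _ _ _) (intg x y _ _ _)); try lra.
  have := RInt_ge_0 g x y xy (intg x y ltac:(lra) xy ltac:(lra)) (fun t ht => g_ge0 t ltac:(lra)).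
  rewrite /Hierarchy.plus /=; lra.
exists L; split => //; apply: Rle_trans (L_ub m _); last lra.
by rewrite RInt_point; right.
Qed.

Lemma nonneg_RInt_at_right (g : R -> R) lo m M : lo < m ->
  (forall t, lo < t <= m -> continuous g t) ->
  (forall t, lo < t <= m -> 0 <= g t) ->
  (forall x, lo < x <= m -> RInt g x m <= M) ->
  exists L, filterlim (fun x => RInt g x m) (at_right lo) (locally L).
Proof.
move=> lo_m cg g_ge0 g_bnd.
have intg x y : lo < x -> x <= y -> y <= m -> ex_RInt g x y.
  by move=> *; apply: ex_RInt_continuous_on => // t ht; apply: cg; lra.
apply: (nonincreasing_bounded_at_right _ lo m M lo_m _ g_bnd) => x y lo_x xy ym /=.
rewrite -(RInt_Chasles g x y m (intg x y _ _ _) (intg y m _ _ _)); try lra.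
have := RInt_ge_0 g x y xy (intg x y ltac:(lra) xy ltac:(lra)) (fun t ht => g_ge0 t ltac:(lra)).
rewrite /Hierarchy.plus /=; lra.
Qed.

Lemma RInt_ge_on_subinterval (g : R -> R) x p q y eps :
  x <= p -> p <= q -> q <= y ->
  (forall t, x <= t <= y -> continuous g t) ->
  (forall t, x <= t <= y -> 0 <= g t) ->
  (forall t, p <= t <= q -> eps <= g t) ->
  eps * (q - p) <= RInt g x y.
Proof.
move=> xp pq qy cg g_ge0 g_eps.
have int u v : x <= u -> u <= v -> v <= y -> ex_RInt g u v.
  by move=> *; apply: ex_RInt_continuous_on => // t ht; apply: cg; lra.
rewrite -(RInt_Chasles g x p y (int x p _ _ _) (int p y _ _ _)); try lra.
rewrite -(RInt_Chasles g p q y (int p q _ _ _) (int q y _ _ _)); try lra.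
have := RInt_ge_0 g x p xp (int x p (Rle_refl x) xp ltac:(lra))
  (fun t ht => g_ge0 t ltac:(lra)).
have := RInt_ge_0 g q y qy (int q y ltac:(lra) qy (Rle_refl y))
  (fun t ht => g_ge0 t ltac:(lra)).
have : RInt (fun _ => eps) p q <= RInt g p q.
  apply: RInt_le; [lra | exact: ex_RInt_const | apply: int; lra |].
  by move=> t ht; apply: g_eps; lra.
by rewrite RInt_const /scal /= /mult /= /Hierarchy.plus /=; lra.
Qed.

Lemma continuous_inv_sqrt K hi t : t < hi -> continuous (fun t => K / sqrt (hi - t)) t.
Proof.
move=> t_hi; apply: continuous_Rdiv; [exact: continuous_const | |].
- apply: continuous_sqrt_comp.
  by apply: continuous_Rminus; [exact: continuous_const | exact: continuous_id].
- by have := sqrt_lt_R0 (hi - t) ltac:(lra); lra.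
Qed.

Lemma RInt_inv_sqrt K hi x y : x <= y < hi ->
  RInt (fun t => K / sqrt (hi - t)) x y = 2 * K * (sqrt (hi - x) - sqrt (hi - y)).
Proof.
move=> hxy.
have t_hi t : Rmin x y <= t <= Rmax x y -> t < hi.
  by rewrite Rmin_left ?Rmax_right; lra.
rewrite (is_RInt_unique _ _ _ _ (is_RInt_derive (fun t => - 2 * K * sqrt (hi - t)) _ x y _ _)).
- by rewrite /Hierarchy.minus /Hierarchy.plus /Hierarchy.opp /=; ring.
- move=> t /t_hi ht; auto_derive; first lra.
  have := sqrt_lt_R0 (hi - t) ltac:(lra); rewrite -/(Rminus hi t) => ?; field; lra.
- by move=> t /t_hi; apply: continuous_inv_sqrt.
Qed.

Lemma inv_sqrt_dominated_RInt_at_left (g : R -> R) m hi K : m < hi ->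
  (forall t, m <= t < hi -> continuous g t) ->
  (forall t, m <= t < hi -> 0 <= g t <= K / sqrt (hi - t)) ->
  exists L, filterlim (fun y => RInt g m y) (at_left hi) (locally L) /\ 0 <= L.
Proof.
move=> m_hi cg g_bnd.
have intg y : m <= y < hi -> ex_RInt g m y.
  by move=> hy; apply: ex_RInt_continuous_on => [|t ht]; [lra | apply: cg; lra].
have K_ge0 : 0 <= K.
  have [g0 gK] := g_bnd m ltac:(lra); have s_pos := sqrt_lt_R0 (hi - m) ltac:(lra).
  have -> : K = K / sqrt (hi - m) * sqrt (hi - m) by field; lra.
  apply: Rmult_le_pos; lra.
apply: (nonneg_RInt_at_left _ m hi (2 * K * sqrt (hi - m))) => // [t ht|y hy].
  by case: (g_bnd t ht).
apply: Rle_trans (_ : RInt (fun t => K / sqrt (hi - t)) m y <= _).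
  apply: RInt_le; [lra | exact: intg | | by move=> t ht; apply: (proj2 (g_bnd t _)); lra].
  by apply: ex_RInt_continuous_on => [|t ht]; [lra | apply: continuous_inv_sqrt; lra].
rewrite RInt_inv_sqrt //; have := sqrt_pos (hi - y); nra.
Qed.

Lemma inv_sqrt_bounded_RInt_at_left (g : R -> R) m hi K : m < hi ->
  (forall t, m <= t < hi -> continuous g t) ->
  (forall t, m <= t < hi -> Rabs (g t) <= K / sqrt (hi - t)) ->
  exists L, filterlim (fun y => RInt g m y) (at_left hi) (locally L).
Proof.
move=> m_hi cg g_bnd.
pose k t := K / sqrt (hi - t).
have ck t : m <= t < hi -> continuous k t by move=> ht; apply: continuous_inv_sqrt; lra.
have ex_int (h : R -> R) y :
    (forall t, m <= t < hi -> continuous h t) -> m <= y < hi -> ex_RInt h m y.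
  by move=> ch hy; apply: ex_RInt_continuous_on => [|t ht]; [lra | apply: ch; lra].
have gk_bnd t : m <= t < hi -> 0 <= g t + k t <= 2 * K / sqrt (hi - t).
  by move=> /g_bnd /Rabs_le_between; rewrite /k; lra.
have [L1 [lim1 _]] := inv_sqrt_dominated_RInt_at_left (fun t => g t + k t) m hi (2 * K) m_hi
  (fun t ht => continuous_Rplus _ _ _ (cg t ht) (ck t ht)) gk_bnd.
have [L2 [lim2 _]] := inv_sqrt_dominated_RInt_at_left k m hi K m_hi ck
  (fun t ht => conj (Rle_trans _ _ _ (Rabs_pos _) (g_bnd t ht)) (Rle_refl _)).
exists (L1 + - L2).
apply: (filterlim_ext_loc (fun y => RInt (fun t => g t + k t) m y + - RInt k m y)).
  apply: filter_imp (at_left_between m hi m_hi) => y hy.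
  rewrite (RInt_plus g k m y (ex_int g y cg _) (ex_int k y ck _)) /Hierarchy.plus /=; lra.
exact: filterlim_Rplus lim1 (filterlim_Ropp _ _ _ lim2).
Qed.

(** * Regular scale factors *)

Section RegularScaleFactor.

Variable a : R -> R.
Hypothesis a_reg : regular_scale_factor a.

Lemma a_0 : a 0 = 0.
Proof. by case: a_reg. Qed.

Lemma a_lt s t : 0 <= s -> s < t -> a s < a t.
Proof. by case: a_reg => _ [_ [a_incr _]]; exact: a_incr. Qed.

Lemma a_le s t : 0 <= s -> s <= t -> a s <= a t.
Proof.
by move=> s_ge0 /Rle_lt_or_eq_dec [/(a_lt _ _ s_ge0) /Rlt_le | ->] //; right.
Qed.

Lemma a_gt0 t : 0 < t -> 0 < a t.
Proof. by move=> t_gt0; rewrite -a_0; apply: a_lt => //; right. Qed.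

Lemma a_ge0 t : 0 <= t -> 0 <= a t.
Proof. by move=> t_ge0; rewrite -a_0; apply: a_le => //; right. Qed.

Lemma continuous_a t : 0 <= t -> continuous a t.
Proof. by case: a_reg => _ [_ [_ [ca _]]]; exact: ca. Qed.

Lemma a_smooth t : 0 < t ->
  ex_derive a t /\ ex_derive (ad a) t /\ continuous (add a) t.
Proof. by case: a_reg => _ [_ [_ [_ [da _]]]]; exact: da. Qed.

Lemma is_derive_a t : 0 < t -> is_derive a t (ad a t).
Proof. by move/a_smooth => [da _]; exact: Derive_correct. Qed.

Lemma is_derive_ad t : 0 < t -> is_derive (ad a) t (add a t).
Proof. by move/a_smooth => [_ [dda _]]; exact: Derive_correct. Qed.

Lemma continuous_ad t : 0 < t -> continuous (ad a) t.
Proof. by move/a_smooth => [_ [dda _]]; exact: ex_derive_continuous. Qed.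

Lemma continuous_add t : 0 < t -> continuous (add a) t.
Proof. by move/a_smooth => [_ [_ cdda]]. Qed.

Lemma ad_neq0 t : 0 < t -> ad a t <> 0.
Proof. by case: a_reg => _ [_ [_ [_ [_ [_ cond]]]]] /cond []. Qed.

Lemma a_add_le t : 0 < t -> a t * add a t <= ad a t ^ 2.
Proof.
case: a_reg => _ [_ [_ [_ [_ [_ cond]]]]] /cond [ad0 le1].
have sq_pos : 0 < ad a t ^ 2 by apply: pow2_gt_0.
have := Rmult_le_compat_r _ _ _ (Rlt_le _ _ sq_pos) le1.
by rewrite /Rdiv Rmult_assoc Rinv_l ?Rmult_1_r ?Rmult_1_l //; lra.
Qed.

Lemma ad_gt0 t : 0 < t -> 0 < ad a t.
Proof.
move=> t_gt0; case: (Rle_lt_dec (ad a t) 0) => // ad_le0.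
have ad_lt0 : ad a t < 0 by have := ad_neq0 t t_gt0; lra.
have [[d d_pos] /= near] :=
  proj1 (is_derive_Reals _ _ _) (is_derive_a t t_gt0) (- ad a t / 2) ltac:(lra).
have := near (d / 2) ltac:(lra) ltac:(rewrite Rabs_right; lra).
have := a_lt t (t + d / 2) ltac:(lra) ltac:(lra) => incr.
have : 0 < (a (t + d / 2) - a t) / (d / 2) by apply: Rdiv_lt_0_compat; lra.
move=> ? /Rabs_lt_between'; lra.
Qed.

Lemma log_derivative_antitone s t : 0 < s -> s <= t -> ad a t * a s <= ad a s * a t.
Proof.
move=> s_gt0 st.
have [c [hc q_mvt]] := MVT_le (fun x => ad a x / a x)
  (fun x => (add a x * a x - ad a x * ad a x) / a x ^ 2) s t st
  (fun x hx => is_derive_div _ _ _ _ _ (is_derive_ad x ltac:(lra)) (is_derive_a x ltac:(lra))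
     (Rgt_not_eq _ _ (a_gt0 x ltac:(lra))))
  (fun x hx => continuous_Rdiv _ _ _ (continuous_ad x ltac:(lra)) (continuous_a x ltac:(lra))
     (Rgt_not_eq _ _ (a_gt0 x ltac:(lra)))).
have slope_le0 : (add a c * a c - ad a c * ad a c) / a c ^ 2 <= 0.
  have := a_add_le c ltac:(lra); have := a_gt0 c ltac:(lra) => ac_gt0 ?.
  by apply: Rmult_le_0_r; [nra | apply/Rlt_le/Rinv_0_lt_compat; nra].
have as_gt0 := a_gt0 s s_gt0; have at_gt0 := a_gt0 t ltac:(lra).
have -> : ad a t * a s = ad a t / a t * (a s * a t) by field; lra.
have -> : ad a s * a t = ad a s / a s * (a s * a t) by field; lra.
by apply: Rmult_le_compat_r; nra.
Qed.

Lemma log_derivative_not_constant tau : 0 < tau ->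
  exists t, 0 < t < tau /\ ad a tau * a t < ad a t * a tau.
Proof.
move=> tau_gt0; apply: NNPP => none.
have atau_gt0 := a_gt0 tau tau_gt0.
pose k := ad a tau / a tau.
have ad_le t : 0 < t <= tau -> ad a t <= k * a t.
  move=> ht; have at_gt0 := a_gt0 t ltac:(lra).
  suff : ad a t * a tau <= ad a tau * a t.
    move=> le; apply: (Rmult_le_reg_r (a tau)) => //.
    by have -> : k * a t * a tau = ad a tau * a t by rewrite /k; field; lra.
  case: (Req_dec t tau) => [-> | ne]; first by right.
  by apply: Rnot_lt_le => lt; apply: none; exists t; split => //; lra.
pose q x := a x * exp (- (k * x)).
have q_antitone t : 0 < t < tau -> q tau <= q t.
  move=> ht.
  have [c [hc q_diff]] : exists c, t <= c <= tau /\
      q tau - q t = (ad a c - k * a c) * exp (- (k * c)) * (tau - t).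
    apply: MVT_le => [|x hx|x hx]; first lra.
    - have := is_derive_a x ltac:(lra) => da.
      rewrite /q; auto_derive; first by exists (ad a x).
      by rewrite (is_derive_unique _ _ _ da); ring.
    - apply: continuous_Rmult; first by apply: continuous_a; lra.
      by apply: ex_derive_continuous; auto_derive.
  have := ad_le c ltac:(lra); have := exp_pos (- (k * c)) => ? ?.
  have : (ad a c - k * a c) * exp (- (k * c)) <= 0 by nra.
  nra.
have q_tau_gt0 : 0 < q tau by apply: Rmult_lt_0_compat => //; exact: exp_pos.
have k_gt0 : 0 < k by apply: Rdiv_lt_0_compat => //; exact: ad_gt0.
have [t [a_small ht]] : exists t, a t < q tau /\ 0 < t < tau.
  apply: (filter_ex (F := at_right 0)); apply: filter_and.
  - by apply: eventually_at_right_lt; [apply: continuous_a; right | rewrite a_0].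
  - exact: at_right_between.
have : exp (- (k * t)) < 1 by rewrite -exp_0; apply: exp_increasing; nra.
move: a_small (q_antitone t ht) (a_gt0 t (proj1 ht)); rewrite /q; nra.
Qed.

Section TimeSlice.

Variable tau : R.
Hypothesis tau_gt0 : 0 < tau.

Definition sqrt_gap t := sqrt (a tau ^ 2 - a t ^ 2).

Lemma sqrt_gap_sq t : 0 <= t <= tau -> sqrt_gap t ^ 2 = a tau ^ 2 - a t ^ 2.
Proof.
move=> ht; rewrite /sqrt_gap pow2_sqrt //.
by have := a_le t tau ltac:(lra) ltac:(lra); have := a_ge0 t ltac:(lra); nra.
Qed.

Lemma sqrt_gap_ge0 t : 0 <= sqrt_gap t.
Proof. exact: sqrt_pos. Qed.

Lemma sqrt_gap_gt0 t : 0 <= t < tau -> 0 < sqrt_gap t.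
Proof.
move=> ht; apply: sqrt_lt_R0.
by have := a_lt t tau ltac:(lra) ltac:(lra); have := a_ge0 t ltac:(lra); nra.
Qed.

Lemma sqrt_gap_lt t : 0 < t <= tau -> sqrt_gap t < a tau.
Proof.
move=> ht; have atau_gt0 := a_gt0 tau tau_gt0.
rewrite -(sqrt_pow2 (a tau)); last lra.
apply: sqrt_lt_1_alt.
by have := a_gt0 t ltac:(lra); have := a_le t tau ltac:(lra) ltac:(lra); nra.
Qed.

Lemma sqrt_gap_antitone s t : 0 <= s -> s <= t -> sqrt_gap t <= sqrt_gap s.
Proof.
move=> s_ge0 st; apply: sqrt_le_1_alt.
by have := a_le s t s_ge0 st; have := a_ge0 s s_ge0; nra.
Qed.

Lemma sqrt_gap_0 : sqrt_gap 0 = a tau.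
Proof.
rewrite /sqrt_gap a_0 -{2}(sqrt_pow2 (a tau)); last by apply: a_ge0; lra.
by congr sqrt; ring.
Qed.

Lemma sqrt_gap_tau : sqrt_gap tau = 0.
Proof. by rewrite /sqrt_gap Rminus_diag sqrt_0. Qed.

Lemma continuous_sqrt_gap t : 0 <= t -> continuous sqrt_gap t.
Proof.
move=> t_ge0; apply: continuous_sqrt_comp; apply: continuous_Rminus.
  exact: continuous_const.
by apply: continuous_pow; exact: continuous_a.
Qed.

(* Near [tau], a(tau) - a(t) is comparable to tau - t because a'(tau) > 0. *)
Lemma inv_sqrt_gap_le : exists m K, 0 < m < tau /\
  forall t, m <= t < tau -> / sqrt_gap t <= K / sqrt (tau - t).
Proof.
have d_gt0 := ad_gt0 tau tau_gt0.
have [m [hm ad_big]] : exists m, 0 < m < tau /\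
    forall x, m <= x <= tau -> ad a tau / 2 < ad a x.
  have /filterlim_locally := continuous_ad tau tau_gt0.
  move/(_ (mkposreal (ad a tau / 2) ltac:(lra))) => [[del del_gt0] /= near].
  have := Rmax_l (tau / 2) (tau - del / 2); have := Rmax_r (tau / 2) (tau - del / 2).
  move=> ? ?; exists (Rmax (tau / 2) (tau - del / 2)); split.
    by split; [lra | apply: Rmax_lub_lt; lra].
  move=> x hx; have /Rabs_lt_between' : ball (ad a tau) (ad a tau / 2) (ad a x).
    by apply: near; apply/Rabs_lt_between'; lra.
  lra.
pose c := ad a tau / 2 * a tau.
have c_gt0 : 0 < c by apply: Rmult_lt_0_compat; [lra | exact: a_gt0].
exists m, (/ sqrt c); split => // t ht.
have [x [hx a_mvt]] := MVT_le a (ad a) t tau ltac:(lra)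
  (fun x hx => is_derive_a x ltac:(lra)) (fun x hx => continuous_a x ltac:(lra)).
have gap_sq : c * (tau - t) <= sqrt_gap t ^ 2.
  rewrite sqrt_gap_sq; last lra.
  have -> : a tau ^ 2 - a t ^ 2 = ad a x * (tau - t) * (a tau + a t) by rewrite -a_mvt; ring.
  have := ad_big x ltac:(lra) => ad_x.
  have : 0 <= (ad a x - ad a tau / 2) * (tau - t) by apply: Rmult_le_pos; lra.
  have : 0 <= ad a x * (tau - t) by apply: Rmult_le_pos; lra.
  have := a_ge0 t ltac:(lra); have := a_gt0 tau tau_gt0.
  rewrite /c; nra.
have lower : sqrt c * sqrt (tau - t) <= sqrt_gap t.
  rewrite -sqrt_mult; try lra.
  by rewrite -(sqrt_pow2 (sqrt_gap t)); [apply: sqrt_le_1_alt | exact: sqrt_pos].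
have := sqrt_lt_R0 _ c_gt0; have := sqrt_lt_R0 (tau - t) ltac:(lra) => ? ?.
by rewrite /Rdiv -Rinv_mult; apply: Rinv_le_contravar => //; nra.
Qed.

Lemma rhoM_gt0 : 0 < rhoM a tau.
Proof.
have [m [K [hm K_bnd]]] := inv_sqrt_gap_le.
pose f t := a t / sqrt_gap t.
have cf t : 0 <= t < tau -> continuous f t.
  move=> ht; apply: continuous_Rdiv.
  - by apply: continuous_a; lra.
  - by apply: continuous_sqrt_gap; lra.
  - by have := sqrt_gap_gt0 t ht; lra.
have [||L2 [tail L2_ge0]] := inv_sqrt_dominated_RInt_at_left f m tau (a tau * K) (proj2 hm).
- by move=> t ht; apply: cf; lra.
- move=> t ht; have := sqrt_gap_gt0 t ltac:(lra) => gap_gt0.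
  split; first by apply: Rdiv_le_0_compat => //; apply: a_ge0; lra.
  rewrite /f /Rdiv Rmult_assoc; apply: Rmult_le_compat.
  + by apply: a_ge0; lra.
  + exact/Rlt_le/Rinv_0_lt_compat.
  + by apply: a_le; lra.
  + exact: K_bnd.
have head_gt0 : 0 < RInt f 0 m.
  apply: RInt_gt_0 => [|t ht|t ht]; first lra; last by apply: cf; lra.
  by apply: Rdiv_lt_0_compat; [apply: a_gt0 | apply: sqrt_gap_gt0]; lra.
have := is_RInt_gen_at_right_at_left f 0 m tau _ _ ltac:(lra)
  (fun t ht => cf t ltac:(lra)) (filterlim_RInt_at_right f 0 m (proj1 hm) _) tail.
move/(_ (fun t ht => cf t ltac:(lra))) => rho_int.
by rewrite /rhoM /iint (is_RInt_gen_unique _ _ rho_int); lra.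
Qed.

Definition chi_integrand t := / a t * (a tau / sqrt_gap t).

Lemma continuous_chi_integrand t : 0 < t < tau -> continuous chi_integrand t.
Proof.
move=> ht; apply: continuous_Rmult.
  apply: continuous_Rinv_comp; first by apply: continuous_a; lra.
  by have := a_gt0 t ltac:(lra); lra.
apply: continuous_Rdiv; [exact: continuous_const | by apply: continuous_sqrt_gap; lra |].
by have := sqrt_gap_gt0 t ltac:(lra); lra.
Qed.

Lemma chi_integrand_ge0 t : 0 < t < tau -> 0 <= chi_integrand t.
Proof.
move=> ht; apply: Rmult_le_pos; first by apply/Rlt_le/Rinv_0_lt_compat/a_gt0; lra.
apply: Rdiv_le_0_compat; first by apply: a_ge0; lra.
by apply: sqrt_gap_gt0; lra.
Qed.

Lemma a_chi_integrand_le s t m : 0 < s -> s <= t -> t <= m -> m < tau ->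
  a s * chi_integrand t <= a tau / sqrt_gap m.
Proof.
move=> s_gt0 st tm m_tau.
have at_gt0 := a_gt0 t ltac:(lra); have gap_gt0 := sqrt_gap_gt0 t ltac:(lra).
have ratio_le1 : a s / a t <= 1.
  have := a_le s t ltac:(lra) st => as_le.
  by apply: (Rmult_le_reg_r (a t)) => //; rewrite /Rdiv Rmult_assoc Rinv_l; lra.
have -> : a s * chi_integrand t = a s / a t * (a tau / sqrt_gap t).
  by rewrite /chi_integrand /Rdiv; ring.
rewrite -[X in _ <= X]Rmult_1_l; apply: Rmult_le_compat => //.
- by apply: Rdiv_le_0_compat; [apply: a_ge0 |]; lra.
- by apply: Rdiv_le_0_compat; [apply: a_ge0 |]; lra.
- apply: Rmult_le_compat_l; first by apply: a_ge0; lra.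
  by apply: Rinv_le_contravar; [apply: sqrt_gap_gt0 | apply: sqrt_gap_antitone]; lra.
Qed.

Lemma chi_split : exists m C, 0 < m < tau /\ 0 <= C /\
  forall s, 0 < s < m -> chi a s tau = RInt chi_integrand s m + C.
Proof.
have [m [K [hm K_bnd]]] := inv_sqrt_gap_le.
have am_gt0 := a_gt0 m (proj1 hm).
have [||C [tail C_ge0]] := inv_sqrt_dominated_RInt_at_left chi_integrand m tau
  (/ a m * a tau * K) (proj2 hm).
- by move=> t ht; apply: continuous_chi_integrand; lra.
- move=> t ht; split; first by apply: chi_integrand_ge0; lra.
  have := sqrt_gap_gt0 t ltac:(lra) => gap_gt0.
  rewrite /chi_integrand /Rdiv !Rmult_assoc; apply: Rmult_le_compat.
  + by apply/Rlt_le/Rinv_0_lt_compat/a_gt0; lra.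
  + by apply: Rmult_le_pos; [apply: a_ge0 | apply/Rlt_le/Rinv_0_lt_compat]; lra.
  + by apply: Rinv_le_contravar => //; apply: a_le; lra.
  + by apply: Rmult_le_compat_l; [apply: a_ge0; lra | exact: K_bnd].
exists m, C; split => //; split => // s hs.
have head := filterlim_RInt_at_right chi_integrand s m (proj2 hs)
  (fun t ht => continuous_chi_integrand t ltac:(lra)).
have chi_int := is_RInt_gen_at_right_at_left chi_integrand s m tau _ _ ltac:(lra)
  (fun t ht => continuous_chi_integrand t ltac:(lra)) head tail.
by rewrite /chi /iint (is_RInt_gen_unique _ _ chi_int).
Qed.

(* On (s, d) the factor a(s) <= a(t) keeps a(s) times the integrand of chi_s
   bounded, so that part is O(d); the rest is a fixed integral times a(s). *)
Lemma a_chi_le : exists m B, 0 < m < tau /\ 0 < B /\ forall d, 0 < d <= m ->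
  exists Cd, 0 <= Cd /\ forall s, 0 < s < d -> 0 <= a s * chi a s tau <= d * B + a s * Cd.
Proof.
have [m [C [hm [C_ge0 chi_eq]]]] := chi_split.
have int_chi x y : 0 < x -> x <= y -> y <= m -> ex_RInt chi_integrand x y.
  move=> *; apply: ex_RInt_continuous_on => // t ht.
  by apply: continuous_chi_integrand; lra.
exists m, (a tau / sqrt_gap m); do 2 split => //.
  by apply: Rdiv_lt_0_compat; [apply: a_gt0 | apply: sqrt_gap_gt0]; lra.
move=> d hd.
have int_dm := int_chi d m (proj1 hd) (proj2 hd) (Rle_refl m).
have far_ge0 : 0 <= RInt chi_integrand d m.
  exact: RInt_ge_0 _ d m (proj2 hd) int_dm (fun t ht => chi_integrand_ge0 t ltac:(lra)).
exists (RInt chi_integrand d m + C); split => [|s hs]; first lra.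
have as_gt0 := a_gt0 s (proj1 hs).
have int_sd := int_chi s d (proj1 hs) ltac:(lra) ltac:(lra).
have near_ge0 : 0 <= RInt chi_integrand s d.
  exact: RInt_ge_0 _ s d ltac:(lra) int_sd (fun t ht => chi_integrand_ge0 t ltac:(lra)).
have near_le : a s * RInt chi_integrand s d <= d * (a tau / sqrt_gap m).
  have := RInt_scal _ _ _ (a s) int_sd; rewrite /scal /= /mult /= => <-.
  apply: Rle_trans (_ : RInt (fun _ => a tau / sqrt_gap m) s d <= _).
    apply: RInt_le; [lra | exact: ex_RInt_scal int_sd | exact: ex_RInt_const |].
    by move=> t ht; apply: a_chi_integrand_le; lra.
  rewrite RInt_const /scal /= /mult /=; apply: Rmult_le_compat_r; last lra.
  by apply: Rdiv_le_0_compat; [apply: a_ge0 | apply: sqrt_gap_gt0]; lra.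
rewrite chi_eq; last lra.
rewrite -(RInt_Chasles _ s d m int_sd int_dm) /Hierarchy.plus /=.
by split; nra.
Qed.

Lemma filterlim_a_chi : filterlim (fun s => a s * chi a s tau) (at_right 0) (locally 0).
Proof.
have [m [B [hm [B_gt0 a_chi_bnd]]]] := a_chi_le.
apply/filterlim_locally => eps; have eps_gt0 := cond_pos eps.
pose d := Rmin m (eps / (2 * B)).
have d_gt0 : 0 < d by apply: Rmin_pos; [lra | apply: Rdiv_lt_0_compat; lra].
have d_B : d * B <= eps / 2.
  have : d * B <= eps / (2 * B) * B by apply: Rmult_le_compat_r; [lra | apply: Rmin_r].
  by have -> : eps / (2 * B) * B = eps / 2 by field; lra.
have [Cd [Cd_ge0 bnd]] := a_chi_bnd d (conj d_gt0 (Rmin_l _ _)).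
have : at_right 0 (fun s => a s < eps / (2 * (Cd + 1)) /\ 0 < s < d).
  apply: filter_and; last exact: at_right_between.
  apply: eventually_at_right_lt; first by apply: continuous_a; right.
  by rewrite a_0; apply: Rdiv_lt_0_compat; lra.
apply: filter_imp => s [a_small hs]; have [ge0 le] := bnd s hs.
have a_Cd : a s * Cd < eps / 2.
  have := a_ge0 s (Rlt_le _ _ (proj1 hs)) => as_ge0.
  have -> : eps / 2 = eps / (2 * (Cd + 1)) * (Cd + 1) by field; lra.
  apply: Rle_lt_trans (_ : a s * Cd <= a s * (Cd + 1)) _; first nra.
  by apply: Rmult_lt_compat_r; lra.
change (Rabs (a s * chi a s tau - 0) < eps).
by rewrite Rminus_0_r Rabs_pos_eq; lra.
Qed.

Lemma gthth_M_eq0 : gthth_M a tau = 0.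
Proof.
suff lim : filterlim (fun t => a t ^ 2 * chi a (Rabs t) tau ^ 2) (at_right 0) (locally 0).
  rewrite /gthth_M /Lim (is_lim_seq_unique _ 0) //.
  exact: filterlim_comp (filterlim_Rbar_loc_seq_at_right 0) lim.
apply: (filterlim_ext_loc (fun t => (a t * chi a t tau) ^ 2)).
  by apply: filter_imp (at_right_between 0 tau tau_gt0) => t ht; rewrite Rabs_pos_eq; [ring | lra].
have sq : filterlim (fun x => x ^ 2) (locally 0) (locally 0).
  by have := continuous_pow _ 2 0 (continuous_id 0); rewrite /continuous /= Rmult_0_l.
exact: filterlim_comp filterlim_a_chi sq.
Qed.

(** * The inequality a'(tau) f(tau, 0) < 1 *)

Definition excess t := a tau / sqrt_gap t - 1.

Definition f_integrand t := add a t / ad a t ^ 2 *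
  (sqrt (a tau ^ 2 - a 0 ^ 2) / sqrt (a tau ^ 2 - a t ^ 2) - 1).

Lemma f_integrand_eq t : f_integrand t = add a t / ad a t ^ 2 * excess t.
Proof. by rewrite /f_integrand -/(sqrt_gap 0) sqrt_gap_0. Qed.

Lemma excess_gt0 t : 0 < t < tau -> 0 < excess t.
Proof.
move=> ht; have := sqrt_gap_gt0 t ltac:(lra); have := sqrt_gap_lt t ltac:(lra) => ? ?.
suff : 1 < a tau / sqrt_gap t by rewrite /excess; lra.
by apply: (Rmult_lt_reg_r (sqrt_gap t)) => //; rewrite /Rdiv Rmult_assoc Rinv_l; lra.
Qed.

Lemma continuous_excess t : 0 <= t < tau -> continuous excess t.
Proof.
move=> ht; apply: continuous_Rminus; last exact: continuous_const.
apply: continuous_Rdiv; [exact: continuous_const | by apply: continuous_sqrt_gap; lra |].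
by have := sqrt_gap_gt0 t ht; lra.
Qed.

Lemma continuous_add_ad2 t : 0 < t -> continuous (fun t => add a t / ad a t ^ 2) t.
Proof.
move=> t_gt0; apply: continuous_Rdiv; [exact: continuous_add | |].
  by apply: continuous_pow; exact: continuous_ad.
by apply/Rgt_not_eq/pow_lt/ad_gt0.
Qed.

Lemma continuous_f_integrand t : 0 < t < tau -> continuous f_integrand t.
Proof.
move=> ht; apply: (continuous_ext (fun t => add a t / ad a t ^ 2 * excess t)).
  by move=> u; rewrite f_integrand_eq.
by apply: continuous_Rmult; [apply: continuous_add_ad2 | apply: continuous_excess]; lra.
Qed.

Definition G t := a t / (a tau + sqrt_gap t).

Definition dG t := ad a t * a tau / (sqrt_gap t * (a tau + sqrt_gap t)).

Lemma G_0 : G 0 = 0.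
Proof. by rewrite /G a_0 /Rdiv Rmult_0_l. Qed.

Lemma G_tau : G tau = 1.
Proof.
rewrite /G sqrt_gap_tau Rplus_0_r /Rdiv Rinv_r //.
by have := a_gt0 tau tau_gt0; lra.
Qed.

Lemma G_ge0 t : 0 <= t -> 0 <= G t.
Proof.
move=> t_ge0; apply: Rdiv_le_0_compat; first exact: a_ge0.
by have := a_gt0 tau tau_gt0; have := sqrt_gap_ge0 t; lra.
Qed.

Lemma continuous_G t : 0 <= t -> continuous G t.
Proof.
move=> t_ge0; apply: continuous_Rdiv; first exact: continuous_a.
  by apply: continuous_Rplus; [exact: continuous_const | exact: continuous_sqrt_gap].
by have := a_gt0 tau tau_gt0; have := sqrt_gap_ge0 t; lra.
Qed.

Lemma is_derive_G t : 0 < t < tau -> is_derive G t (dG t).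
Proof.
move=> ht; have da := is_derive_a t ltac:(lra).
have gap_gt0 := sqrt_gap_gt0 t ltac:(lra); have gap_sq := sqrt_gap_sq t ltac:(lra).
have atau_gt0 := a_gt0 tau tau_gt0; have at_lt := a_lt t tau ltac:(lra) ltac:(lra).
have at_gt0 := a_gt0 t ltac:(lra).
rewrite /G /dG /sqrt_gap in gap_gt0 gap_sq *.
have e : a tau * (a tau * 1) + - (a t * (a t * 1)) = a tau ^ 2 - a t ^ 2 by ring.
auto_derive; rewrite e.
  by repeat split; try (exists (ad a t); exact: da); nra.
change (Derive (fun x => a x) t) with (ad a t).
set S := sqrt (a tau ^ 2 - a t ^ 2) in gap_gt0 gap_sq *; clearbody S.
have at_sq : a t ^ 2 = a tau ^ 2 - S ^ 2 by lra.
have ? : 0 < a tau * S by nra.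
have ? : 0 < S ^ 2 by nra.
by field_simplify; try (rewrite at_sq; field); repeat split; apply: Rgt_not_eq; nra.
Qed.

Lemma continuous_dG t : 0 < t < tau -> continuous dG t.
Proof.
move=> ht; have := sqrt_gap_gt0 t ltac:(lra); have := a_gt0 tau tau_gt0 => ? ?.
apply: continuous_Rdiv.
- by apply: continuous_Rmult; [apply: continuous_ad; lra | exact: continuous_const].
- apply: continuous_Rmult; first by apply: continuous_sqrt_gap; lra.
  by apply: continuous_Rplus; [exact: continuous_const | apply: continuous_sqrt_gap; lra].
- by apply: Rgt_not_eq; nra.
Qed.

Lemma RInt_dG x y : 0 < x -> x <= y -> y < tau -> RInt dG x y = G y - G x.
Proof.
move=> x_gt0 xy y_tau.
have in_xy t : Rmin x y <= t <= Rmax x y -> 0 < t < tau.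
  by rewrite Rmin_left ?Rmax_right //; lra.
rewrite (is_RInt_unique _ _ _ _ (is_RInt_derive G dG x y _ _)) //.
- by move=> t /in_xy; exact: is_derive_G.
- by move=> t /in_xy; exact: continuous_dG.
Qed.

Definition slack t := dG t - ad a tau * f_integrand t.

(* [dG] is [a'(t) a(tau) excess(t) / a(t)^2], and [a a'' <= a'^2] bounds
   [f_integrand] by [excess / a]. *)
Lemma slack_ge t : 0 < t < tau ->
  excess t * (ad a t * a tau - ad a tau * a t) / a t ^ 2 <= slack t.
Proof.
move=> ht.
have at_gt0 := a_gt0 t ltac:(lra); have adt_gt0 := ad_gt0 t ltac:(lra).
have adtau_gt0 := ad_gt0 tau tau_gt0; have atau_gt0 := a_gt0 tau tau_gt0.
have gap_gt0 := sqrt_gap_gt0 t ltac:(lra); have gap_sq := sqrt_gap_sq t ltac:(lra).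
have gap_lt := sqrt_gap_lt t ltac:(lra); have ex_gt0 := excess_gt0 t ht.
have curv_le : add a t / ad a t ^ 2 <= / a t.
  apply: (Rmult_le_reg_r (a t * ad a t ^ 2)); first by apply: Rmult_lt_0_compat; nra.
  have -> : add a t / ad a t ^ 2 * (a t * ad a t ^ 2) = a t * add a t by field; lra.
  have -> : / a t * (a t * ad a t ^ 2) = ad a t ^ 2 by field; lra.
  by apply: a_add_le; lra.
have f_le : ad a tau * f_integrand t <= ad a tau * (/ a t * excess t).
  rewrite f_integrand_eq; apply: Rmult_le_compat_l; first lra.
  by apply: Rmult_le_compat_r; lra.
have dG_eq : dG t = ad a t * a tau * excess t / a t ^ 2.
  rewrite /dG /excess; have -> : a t ^ 2 = a tau ^ 2 - sqrt_gap t ^ 2 by lra.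
  by field; split; nra.
rewrite /slack dG_eq.
have -> : excess t * (ad a t * a tau - ad a tau * a t) / a t ^ 2 =
  ad a t * a tau * excess t / a t ^ 2 - ad a tau * (/ a t * excess t) by field; lra.
lra.
Qed.

Lemma slack_ge0 t : 0 < t < tau -> 0 <= slack t.
Proof.
move=> ht; apply: Rle_trans (slack_ge t ht).
have := log_derivative_antitone t tau (proj1 ht) ltac:(lra).
have := excess_gt0 t ht; have := a_gt0 t (proj1 ht) => ? ? ?.
by apply: Rdiv_le_0_compat; nra.
Qed.

Lemma slack_bounded_below : exists p q eps, 0 < p < q /\ q < tau /\ 0 < eps /\
  forall t, p <= t <= q -> eps <= slack t.
Proof.
have [t1 [ht1 strict]] := log_derivative_not_constant tau tau_gt0.
pose h t := excess t * (ad a t * a tau - ad a tau * a t) / a t ^ 2.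
have h_gt0 : 0 < h t1.
  have := excess_gt0 t1 ht1; have := a_gt0 t1 (proj1 ht1) => ? ?.
  by apply: Rdiv_lt_0_compat; nra.
have ch : continuous h t1.
  apply: continuous_Rdiv; [apply: continuous_Rmult | |].
  - by apply: continuous_excess; lra.
  - apply: continuous_Rminus; apply: continuous_Rmult; try exact: continuous_const.
      by apply: continuous_ad; lra.
    by apply: continuous_a; lra.
  - by apply: continuous_pow; apply: continuous_a; lra.
  - by apply/Rgt_not_eq/pow_lt/a_gt0; lra.
have [p [q [hp [q_tau near]]]] := continuous_gt_half_nbhd h t1 0 tau ht1 ch h_gt0.
exists p, q, (h t1 / 2); do 3 split => //; try lra.
move=> t ht; apply: Rle_trans (slack_ge t _); [|lra].
by apply: Rlt_le; apply: near.
Qed.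

Definition lower_primitive t := - excess t / ad a t.

Lemma is_derive_lower_primitive t : 0 < t < tau ->
  is_derive lower_primitive t (f_integrand t - a tau * a t / sqrt_gap t ^ 3).
Proof.
move=> ht; have da := is_derive_a t ltac:(lra); have dda := is_derive_ad t ltac:(lra).
have gap_gt0 := sqrt_gap_gt0 t ltac:(lra); have adt_gt0 := ad_gt0 t ltac:(lra).
have at_lt := a_lt t tau ltac:(lra) ltac:(lra); have at_gt0 := a_gt0 t ltac:(lra).
rewrite /lower_primitive /f_integrand /excess -/(sqrt_gap 0) sqrt_gap_0 /sqrt_gap in gap_gt0 *.
have e : a tau * (a tau * 1) + - (a t * (a t * 1)) = a tau ^ 2 - a t ^ 2 by ring.
auto_derive; rewrite e.
  repeat split; try (by exists (ad a t)); try (by exists (add a t)); try lra.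
  by have := a_gt0 tau tau_gt0; nra.
change (Derive (fun x => a x) t) with (ad a t).
change (Derive (fun x => ad a x) t) with (add a t).
set S := sqrt (a tau ^ 2 - a t ^ 2) in gap_gt0 *; clearbody S.
by field; lra.
Qed.

Lemma lower_primitive_le0 t : 0 < t < tau -> lower_primitive t <= 0.
Proof.
move=> ht; have := excess_gt0 t ht; have := ad_gt0 t (proj1 ht) => ? ?.
suff : 0 <= excess t / ad a t by rewrite /lower_primitive /Rdiv; lra.
by apply: Rdiv_le_0_compat; lra.
Qed.

Lemma RInt_f_integrand_ge x m : 0 < x -> x <= m -> m < tau ->
  lower_primitive m - lower_primitive x <= RInt f_integrand x m.
Proof.
move=> x_gt0 xm m_tau.
pose dP t := f_integrand t - a tau * a t / sqrt_gap t ^ 3.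
have cdP t : x <= t <= m -> continuous dP t.
  move=> ht; have := sqrt_gap_gt0 t ltac:(lra) => gap_gt0.
  apply: continuous_Rminus; first by apply: continuous_f_integrand; lra.
  apply: continuous_Rdiv.
  - by apply: continuous_Rmult; [exact: continuous_const | apply: continuous_a; lra].
  - by apply: continuous_pow; apply: continuous_sqrt_gap; lra.
  - by apply/Rgt_not_eq/pow_lt.
have in_xm t : Rmin x m <= t <= Rmax x m -> x <= t <= m.
  by rewrite Rmin_left ?Rmax_right.
have primitive : RInt dP x m = lower_primitive m - lower_primitive x.
  rewrite (is_RInt_unique _ _ _ _ (is_RInt_derive lower_primitive dP x m _ _)) //.
  - by move=> t /in_xm ht; apply: is_derive_lower_primitive; lra.
  - by move=> t /in_xm; exact: cdP.
rewrite -primitive; apply: RInt_le => //.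
- exact: ex_RInt_continuous_on.
- by apply: ex_RInt_continuous_on => // t ht; apply: continuous_f_integrand; lra.
move=> t ht; have := sqrt_gap_gt0 t ltac:(lra); have := a_gt0 t ltac:(lra).
move=> ? ?; suff : 0 <= a tau * a t / sqrt_gap t ^ 3 by rewrite /dP; lra.
by apply: Rdiv_le_0_compat; [have := a_gt0 tau tau_gt0; nra | apply: pow_lt].
Qed.

Lemma RInt_slack x y : 0 < x -> x <= y -> y < tau ->
  RInt slack x y = G y - G x - ad a tau * RInt f_integrand x y.
Proof.
move=> x_gt0 xy y_tau.
have int (f : R -> R) : (forall t, 0 < t < tau -> continuous f t) -> ex_RInt f x y.
  by move=> cf; apply: ex_RInt_continuous_on => // t ht; apply: cf; lra.
rewrite /slack RInt_minus ?RInt_scal ?RInt_dG //.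
- exact: int continuous_f_integrand.
- exact: int continuous_dG.
- apply: int => t ht; apply: continuous_Rmult; first exact: continuous_const.
  exact: continuous_f_integrand.
Qed.

Lemma continuous_slack t : 0 < t < tau -> continuous slack t.
Proof.
move=> ht; apply: continuous_Rminus; first exact: continuous_dG.
by apply: continuous_Rmult; [exact: continuous_const | exact: continuous_f_integrand].
Qed.

(* Near 0 only an upper bound on a'' is available; the integral converges
   because [a'(tau) f_integrand = dG - slack], where [G] is continuous at 0 and
   [slack >= 0] has partial integrals bounded via [RInt_f_integrand_ge]. *)
Lemma f_integrand_at_right m : 0 < m < tau ->
  exists L, filterlim (fun x => RInt f_integrand x m) (at_right 0) (locally L).
Proof.
move=> hm; have d_gt0 := ad_gt0 tau tau_gt0.
have [L0 slack_lim] : exists L0, filterlim (fun x => RInt slack x m) (at_right 0) (locally L0).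
  apply: (nonneg_RInt_at_right _ 0 m (G m - ad a tau * lower_primitive m))
    => [|t ht|t ht|x hx].
  - lra.
  - by apply: continuous_slack; lra.
  - by apply: slack_ge0; lra.
  - rewrite RInt_slack; try lra.
    have := RInt_f_integrand_ge x m ltac:(lra) ltac:(lra) ltac:(lra).
    have := lower_primitive_le0 x ltac:(lra); have := G_ge0 x ltac:(lra) => ? ? ?.
    by nra.
exists (/ ad a tau * (G m + - G 0 + - L0)).
apply: (filterlim_ext_loc (fun x => / ad a tau * (G m + - G x + - RInt slack x m))).
  apply: filter_imp (at_right_between 0 m (proj1 hm)) => x hx.
  by rewrite RInt_slack; try lra; field; lra.
apply: filterlim_Rmult_l; apply: filterlim_Rplus.
  apply: filterlim_Rplus; first exact: filterlim_const.
  by apply: filterlim_Ropp; apply: continuous_at_right; apply: continuous_G; right.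
exact: filterlim_Ropp slack_lim.
Qed.

Lemma f_integrand_at_left : exists m L, 0 < m < tau /\
  filterlim (fun y => RInt f_integrand m y) (at_left tau) (locally L).
Proof.
have [m [K [hm K_bnd]]] := inv_sqrt_gap_le.
have [B B_bnd] := bounded_continuity (fun t => add a t / ad a t ^ 2) m tau
  (fun t ht => continuous_add_ad2 t ltac:(lra)).
have [||L tail] := inv_sqrt_bounded_RInt_at_left f_integrand m tau (B * (a tau * K)) (proj2 hm).
- by move=> t ht; apply: continuous_f_integrand; lra.
- move=> t ht; have ex_gt0 := excess_gt0 t ltac:(lra).
  rewrite f_integrand_eq Rabs_mult (Rabs_pos_eq (excess t)); last lra.
  have c_le : Rabs (add a t / ad a t ^ 2) <= B by apply/Rlt_le/(B_bnd t); lra.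
  have ex_le : excess t <= a tau * (K / sqrt (tau - t)).
    have := K_bnd t ht; have := a_gt0 tau tau_gt0 => ? ?.
    suff : a tau / sqrt_gap t <= a tau * (K / sqrt (tau - t)) by rewrite /excess; lra.
    by apply: Rmult_le_compat_l; lra.
  have -> : B * (a tau * K) / sqrt (tau - t) = B * (a tau * (K / sqrt (tau - t))).
    by rewrite /Rdiv; ring.
  by apply: Rmult_le_compat => //; [exact: Rabs_pos | lra].
by exists m, L.
Qed.

Lemma filterlim_RInt_f_integrand :
  filterlim (fun ab => RInt f_integrand ab.1 ab.2) (filter_prod (at_right 0) (at_left tau))
    (locally (ff a tau 0)).
Proof.
have [m [L2 [hm tail]]] := f_integrand_at_left.
have [L1 head] := f_integrand_at_right m hm.
have f_int := is_RInt_gen_at_right_at_left _ 0 m tau _ _ hm continuous_f_integrand head tail.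
rewrite /ff /iint (is_RInt_gen_unique _ _ f_int).
exact: filterlim_RInt_at_right_at_left hm continuous_f_integrand head tail.
Qed.

(* [G] rises from [G 0 = 0] to [G tau = 1] with [G' = a'(tau) f_integrand + slack],
   and the slack has positive integral. *)
Lemma ad_ff_lt1 : ad a tau * ff a tau 0 < 1.
Proof.
have [p [q [eps [hpq [q_tau [eps_gt0 slack_ge_eps]]]]]] := slack_bounded_below.
pose F := filter_prod (at_right 0) (at_left tau).
have ev : F (fun ab => ad a tau * RInt f_integrand ab.1 ab.2 <= G ab.2 - G ab.1 - eps * (q - p)).
  exists (fun x => 0 < x < p) (fun y => q < y < tau);
    [by apply: at_right_between; lra | by apply: at_left_between; lra |].
  move=> x y hx hy /=.
  have := RInt_slack x y ltac:(lra) ltac:(lra) ltac:(lra).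
  have := RInt_ge_on_subinterval slack x p q y eps ltac:(lra) ltac:(lra) ltac:(lra)
    (fun t ht => continuous_slack t ltac:(lra)) (fun t ht => slack_ge0 t ltac:(lra))
    slack_ge_eps.
  lra.
have lim_lhs : filterlim (fun ab => ad a tau * RInt f_integrand ab.1 ab.2) F
    (locally (ad a tau * ff a tau 0)).
  exact: filterlim_Rmult_l filterlim_RInt_f_integrand.
have lim_rhs : filterlim (fun ab => G ab.2 - G ab.1 - eps * (q - p)) F
    (locally (G tau + - G 0 + - (eps * (q - p)))).
  apply: filterlim_Rplus; last exact: filterlim_const.
  apply: filterlim_Rplus.
  - apply: filterlim_comp filterlim_snd _.
    by apply: continuous_at_left; apply: continuous_G; lra.
  - apply: filterlim_Ropp; apply: filterlim_comp filterlim_fst _.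
    by apply: continuous_at_right; apply: continuous_G; right.
have F_proper : ProperFilter' F.
  by apply: filter_prod_proper'; apply: Proper_StrongProper.
have := @filterlim_le _ F F_proper _ _ (ad a tau * ff a tau 0)
  (G tau + - G 0 + - (eps * (q - p))) ev lim_lhs lim_rhs.
by rewrite G_tau G_0 /=; nra.
Qed.

Lemma gtt_M_neq0 : gtt_M a tau <> 0.
Proof.
have := ad_ff_lt1; rewrite /gtt_M => lt1.
have : 0 < (1 - ad a tau * ff a tau 0) ^ 2 by apply: pow_lt; lra.
lra.
Qed.

End TimeSlice.

End RegularScaleFactor.

(** * Rank of the metric *)

(* With [l |v|^2 = -1] the spatial block [I + l (|v|^2 I - v v^T)] collapses to
   [-l v v^T], so the matrix is [A B] with [A = (e_0 | v)], and [A^T M A] is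
   [diag(g, |v|^2)]. *)
Lemma rank_metric_rows (g l x y z : R) :
  g <> 0 -> l * (x ^ 2 + y ^ 2 + z ^ 2) = -1 ->
  \rank (mx_of_rows
    [:: [:: g; 0; 0; 0];
        [:: 0; 1 + l * (y ^ 2 + z ^ 2); - (l * x * y); - (l * x * z)];
        [:: 0; - (l * x * y); 1 + l * (x ^ 2 + z ^ 2); - (l * y * z)];
        [:: 0; - (l * x * z); - (l * y * z); 1 + l * (x ^ 2 + y ^ 2)]]) = 2%N.
Proof.
move=> g_neq0 l_r2; set M := mx_of_rows _.
pose r2 := x ^ 2 + y ^ 2 + z ^ 2.
have r2_neq0 : r2 <> 0 by move=> r2_0; rewrite -/r2 r2_0 Rmult_0_r in l_r2; lra.
pose A : 'M[R]_(4, 2) :=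
  (\matrix_(i < 4, j < 2)
     nth 0 (nth [::] [:: [:: 1; 0]; [:: 0; x]; [:: 0; y]; [:: 0; z]] i) j)%R.
pose B : 'M[R]_(2, 4) :=
  (\matrix_(i < 2, j < 4)
     nth 0 (nth [::] [:: [:: g; 0; 0; 0]; [:: 0; - l * x; - l * y; - l * z]] i) j)%R.
have M_eq : M = (A *m B)%R.
  apply/matrixP => i j; rewrite !mxE !big_ord_recr big_ord0 /= !mxE.
  case: i => [[|[|[|[|?]]]] ?] //=; case: j => [[|[|[|[|?]]]] ?] //=;
  rewrite /GRing.add /GRing.mul /GRing.opp /GRing.zero /GRing.one /=; nra.
have AtMA : (A^T *m M *m A = diag_mx (\row_(j < 2) nth 0 [:: g; r2] j))%R.
  apply/matrixP => i j; rewrite !mxE !big_ord_recr big_ord0 /= !mxE.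
  rewrite !big_ord_recr !big_ord0 /= !mxE.
  case: i => [[|[|?]] ?] //=; case: j => [[|[|?]] ?] //=;
  rewrite ?GRing.mulr1n ?GRing.mulr0n /GRing.add /GRing.mul /GRing.opp /GRing.zero;
  rewrite /GRing.one /= /r2; nra.
apply/eqP; rewrite eqn_leq; apply/andP; split.
  by rewrite M_eq; apply: leq_trans (mxrankM_maxl _ _) (rank_leq_col _).
have rank_AtMA : \rank (A^T *m M *m A)%R = 2%N.
  rewrite AtMA; apply: mxrank_unit.
  rewrite unitmxE det_diag GRing.unitfE !big_ord_recr big_ord0 /= !mxE /=.
  apply/eqP; rewrite /GRing.mul /GRing.one /= => det0.
  by case: (Rmult_integral _ _ det0); lra.
by have := leq_trans (mxrankM_maxl (A^T *m M) A) (mxrankM_maxr A^T M); rewrite rank_AtMA.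
Qed.

Theorem corollary7p8 (a : R -> R) :
  regular_scale_factor a ->
  (forall t, a (- t) = a t) ->
  ((exists d : R, filterlim (Derive a) (at_right 0) (locally d) /\ 0 < d) \/
   (is_derive a 0 0 /\
    exists n : nat, ex_derive_n a n 0 /\ Derive_n a n 0 <> 0)) ->
  forall tau x y z : R, 0 < tau ->
    sqrt (x ^ 2 + y ^ 2 + z ^ 2) = rhoM a tau ->
    \rank (metric_M a tau x y z) = 2%N.
Proof.
move=> a_reg _ _ tau x y z tau_gt0 r_rho.
have rho_gt0 := rhoM_gt0 a a_reg tau tau_gt0.
have r2_rho : x ^ 2 + y ^ 2 + z ^ 2 = rhoM a tau ^ 2.
  by rewrite -r_rho pow2_sqrt //; nra.
apply: rank_metric_rows; first exact: gtt_M_neq0 a a_reg tau tau_gt0.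
rewrite r2_rho /lambda0_M (gthth_M_eq0 a a_reg tau tau_gt0).
by field; lra.
Qed.
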